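(* Let $n\ge 3$ and let $G$ be a graph on $2n$ vertices with at least $n^2-1$ edges that contains no two distinct vertices of the same degree joined by a path of length three. Let $\beta$ be the largest integer such that $G$ contains two distinct vertices of degree $\beta$, and let $\Delta$ be the maximum degree of $G$. Then $3\le\beta\le\Delta$.
   Context: A path of length three joining vertices $a$ and $b$ is a path $a\,x\,y\,b$ with four distinct vertices and three edges. Graphs are finite and simple. *)

From mathcomp Require Import all_boot.
Set Implicit Arguments. Unset Strict Implicit. Unset Printing Implicit Defensive.

Section Graphs.
Variable T : finType.

Definition simple_graph (e : rel T) : Prop := symmetric e /\ irreflexive e.

Definition deg (e : rel T) (v : T) : nat := #|[set u | e v u]|.

Definition edges (e : rel T) : {set {set T}} :=
  [set E : {set T} | [exists u, exists v, e u v && (E == [set u; v])]].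

Definition nedges (e : rel T) : nat := #|edges e|.

Definition path3 (e : rel T) (a b : T) : Prop :=
  exists x y : T, uniq [:: a; x; y; b] /\ e a x /\ e x y /\ e y b.

Definition maxdeg (e : rel T) : nat := \max_(v : T) deg e v.
End Graphs.

From mathcomp Require Import all_boot zify.
Set Implicit Arguments. Unset Strict Implicit. Unset Printing Implicit Defensive.

(* Suppose beta <= 2, so the degrees above 2 are pairwise distinct, and let
   N = 2n.  If no vertex is adjacent to all others, these degrees lie in
   {3, ..., N-2} and the degree sum is at most (N^2 - 3N + 12) / 2, below the
   2(n^2 - 1) = (N^2 - 4) / 2 forced by the edge count once N >= 6.  If z is
   adjacent to all others, two distinct vertices a, b <> z of equal degree have
   no neighbours outside {z, b}, since a neighbour x would give the path a x z b.
   Hence at most two vertices have degree 2 and the same bound holds, unless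
   some y has degree N-2.  Then every vertex of degree <= 2 other than the one
   non-neighbour of y is adjacent to y and z, and two such vertices would have
   the neighbour y outside {z, b}; so at most two vertices have degree <= 2,
   too few next to at most N-3 vertices of distinct degrees in {3, ..., N-1}. *)

Lemma leq_sum_inj_nat (T : finType) (d : T -> nat) (Q : pred T) (g : nat -> nat) m k :
  {in Q &, injective d} -> (forall v, Q v -> m <= d v < k) ->
  \sum_(v | Q v) g (d v) <= \sum_(m <= i < k) g i.
Proof.
move=> d_inj d_range; rewrite -big_image /=.
apply: (uniq_sub_le_big (op := addn) leqnn (fun x y => leq_addr y x)).
- by rewrite map_inj_in_uniq ?enum_uniq // => u v; rewrite !mem_enum; apply: d_inj.
- exact: iota_uniq.
- by move=> i /imageP [v Qv ->]; rewrite mem_index_iota d_range.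
Qed.

Lemma double_sum_nat_subn m k : 2 * \sum_(m <= i < k) (i - m) = (k - m) * (k - m).-1.
Proof.
rewrite -{1}[m]add0n big_addn; under eq_bigr do rewrite addnK.
by rewrite bin2_sum -mul_bin_diag bin1 mulnC.
Qed.

Section SimpleGraph.
Variables (T : finType) (e : rel T).
Hypotheses (sym_e : symmetric e) (irr_e : irreflexive e).

Lemma nbrs_subC1 v : [set u | e v u] \subset [set~ v].
Proof. by apply/subsetP => u; rewrite !inE; apply: contraTneq => ->; rewrite irr_e. Qed.

Lemma deg_lt_card v : deg e v < #|T|.
Proof.
rewrite (leq_ltn_trans (subset_leq_card (nbrs_subC1 v))) // cardsC1 ltn_predL.
by apply/card_gt0P; exists v.
Qed.

Lemma card_non_nbrs v : #|[set~ v] :\: [set u | e v u]| = #|T|.-1 - deg e v.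
Proof. by rewrite cardsD (setIidPr (nbrs_subC1 v)) cardsC1. Qed.

Lemma full_deg_adj z x : deg e z = #|T|.-1 -> x != z -> e z x.
Proof.
move=> z_full xz; have /eqP := card_non_nbrs z.
rewrite z_full subnn cards_eq0 => /eqP /setP /(_ x).
by rewrite !inE xz andbT => /negbFE.
Qed.

Lemma handshake_leq : 2 * nedges e <= \sum_v deg e v.
Proof.
have -> : \sum_v deg e v = \sum_(p : T * T | e p.1 p.2) 1.
  rewrite -(pair_big_dep xpredT (fun u v => e u v) (fun _ _ => 1)) /=.
  by apply: eq_bigr => v _; rewrite sum1dep_card.
rewrite (partition_big (fun p : T * T => [set p.1; p.2]) (mem (edges e))) /=; last first.
  move=> [u v] uv; rewrite inE; apply/existsP; exists u; apply/existsP; exists v.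
  by rewrite uv eqxx.
rewrite /nedges mulnC -sum_nat_const; apply: leq_sum => E.
rewrite inE => /existsP [a /existsP [b /andP [ab /eqP ->]]].
have a_neq_b : a != b by apply: contraTneq ab => ->; rewrite irr_e.
rewrite (bigD1 (a, b)) /= ?ab ?eqxx // (bigD1 (b, a)) //=.
by rewrite (sym_e b a) ab setUC eqxx /= xpair_eqE negb_and eq_sym a_neq_b.
Qed.

Hypothesis path3_free : forall a b, a != b -> deg e a = deg e b -> ~ path3 e a b.
Hypothesis deg_gt2_inj : {in [pred v | 2 < deg e v] &, injective (deg e)}.

Lemma sum_deg_le_no_full : 3 < #|T| -> (forall v, deg e v != #|T|.-1) ->
  2 * \sum_v deg e v + 3 * #|T| <= #|T| ^ 2 + 12.
Proof.
move=> T_gt3 no_full.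
have low_high : \sum_v deg e v <= 2 * #|T| + \sum_(v | 2 < deg e v) (deg e v - 2).
  rewrite mulnC -sum_nat_const [X in _ + X]big_mkcond -big_split /=.
  by apply: leq_sum => v _; case: ltnP; lia.
have high : \sum_(v | 2 < deg e v) (deg e v - 2) <= \sum_(2 <= i < #|T|.-1) (i - 2).
  apply: (leq_sum_inj_nat (fun i => i - 2) deg_gt2_inj) => v; rewrite inE => v_high.
  by have := deg_lt_card v; have := no_full v; lia.
have := double_sum_nat_subn 2 #|T|.-1; nia.
Qed.

Section FullVertex.
Variable z : T.
Hypothesis z_full : deg e z = #|T|.-1.

Lemma equal_deg_nbrs a b : a != b -> deg e a = deg e b -> a != z -> b != z ->
  [set u | e a u] \subset [set z; b].
Proof.
move=> ab dab az bz; apply/subsetP => x; rewrite !inE => ax.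
apply/negPn/negP; rewrite negb_or => /andP [xz xb].
apply: (path3_free ab dab); exists x, z; split; last first.
  by split=> //; rewrite (sym_e x z); split; apply: full_deg_adj.
have a_neq_x : a != x by apply: contraTneq ax => <-; rewrite irr_e.
by rewrite /= !inE !negb_or a_neq_x az ab xz xb eq_sym bz.
Qed.

Lemma card_deg_eq2_le : 3 < #|T| -> #|[set v | deg e v == 2]| <= 2.
Proof.
move=> T_gt3; have not_z v : deg e v = 2 -> v != z.
  by move=> dv; apply/eqP => vz; move: dv; rewrite vz z_full; lia.
case: (set_0Vmem [set v | deg e v == 2]) => [->|[a]]; first by rewrite cards0.
rewrite inE => /eqP da; rewrite (cardsD1 a) inE da eqxx add1n ltnS.
suff sub : [set v | deg e v == 2] :\ a \subset [set u | e a u] :\ z.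
  apply: leq_trans (subset_leq_card sub) _; have az := not_z a da.
  by move: da; rewrite /deg (cardsD1 z) inE (sym_e a z) full_deg_adj //; lia.
apply/subsetP => b; rewrite !inE => /andP [ba /eqP db]; rewrite not_z //=.
have ab : a != b by rewrite eq_sym.
have /eqP nbrs_a : [set u | e a u] == [set z; b].
  have dab : deg e a = deg e b by rewrite da db.
  have sub_zb := equal_deg_nbrs ab dab (not_z a da) (not_z b db).
  by rewrite eqEcard sub_zb cards2 -/(deg e a) da eq_sym not_z.
have : b \in [set z; b] by rewrite !inE eqxx orbT.
by rewrite -nbrs_a inE.
Qed.

Lemma deg_neq_card_sub2 y : 4 < #|T| -> deg e y != #|T|.-2.
Proof.
move=> T_gt4; apply/negP => /eqP dy.
have zy : z != y by apply/eqP => zy; move: dy; rewrite -zy z_full; lia.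
pose L := [set v | deg e v <= 2].
pose M := [set~ y] :\: [set u | e y u].
have L_z v : v \in L -> v != z by rewrite inE; apply: contraTneq => ->; rewrite z_full; lia.
have L_y v : v \in L -> v != y by rewrite inE; apply: contraTneq => ->; rewrite dy; lia.
have LM_adj v : v \in L :\: M -> e y v.
  by case/setDP => vL; rewrite !inE (L_y v vL) andbT negbK.
have LM_deg v : v \in L :\: M -> deg e v = 2.
  move=> vLM; have /setDP [vL _] := vLM.
  have : [set z; y] \subset [set u | e v u].
    by apply/subsetP => x; rewrite !inE => /orP [] /eqP ->;
      rewrite ?(sym_e v y) ?LM_adj // (sym_e v z) full_deg_adj ?L_z.
  by move/subset_leq_card; rewrite cards2 zy; move: vL; rewrite inE /deg; lia.
have card_LM : #|L :\: M| <= 1.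
  apply/card_le1_eqP => a b aLM bLM; apply/eqP/negPn/negP; rewrite eq_sym => ab.
  have [/setDP [aL _] /setDP [bL _]] := (aLM, bLM).
  have dab : deg e a = deg e b by rewrite !LM_deg.
  have /subsetP/(_ y) := equal_deg_nbrs ab dab (L_z a aL) (L_z b bL).
  rewrite !inE (sym_e a y) LM_adj // => /(_ isT) /orP [] /eqP y_eq.
    by rewrite y_eq eqxx in zy.
  by move: (L_y b bL); rewrite y_eq eqxx.
have card_LIM : #|L :&: M| <= 1.
  by rewrite (leq_trans (subset_leq_card (subsetIr L M))) // card_non_nbrs dy; lia.
have card_high : #|[set v | 2 < deg e v]| <= #|T| - 3.
  rewrite -sum1dep_card -[#|T| - 3]muln1 -sum_nat_const_nat.
  apply: (leq_sum_inj_nat (fun=> 1) deg_gt2_inj) => v; rewrite inE => v_high.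
  by rewrite v_high deg_lt_card.
have card_split : #|L| + #|[set v | 2 < deg e v]| = #|T|.
  by rewrite -(cardsC L); congr (_ + _); apply: eq_card => v; rewrite !inE -ltnNge.
have := cardsID M L; lia.
Qed.

Lemma sum_deg_le_full : 4 < #|T| -> 2 * \sum_v deg e v + 3 * #|T| <= #|T| ^ 2 + 12.
Proof.
move=> T_gt4; have z_high : 2 < deg e z by rewrite z_full; lia.
have low_high : \sum_v deg e v <=
    #|T| + #|[set v | deg e v == 2]| + \sum_(v | 2 < deg e v) (deg e v - 1).
  rewrite -sum1dep_card -[#|T|]muln1 -sum_nat_const.
  rewrite [X in _ + X + _]big_mkcond [X in _ + X]big_mkcond -!big_split /=.
  by apply: leq_sum => v _; case: ltngtP; lia.
have split_z : \sum_(v | 2 < deg e v) (deg e v - 1) =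
    #|T|.-2 + \sum_(v | (2 < deg e v) && (v != z)) (deg e v - 1).
  by rewrite (bigD1 z) //= z_full subn1.
have others : \sum_(v | (2 < deg e v) && (v != z)) (deg e v - 1) <=
    \sum_(1 <= i < #|T|.-2) (i - 1).
  apply: (leq_sum_inj_nat (fun i => i - 1)).
    by move=> u v /andP [u_high _] /andP [v_high _]; apply: deg_gt2_inj.
  move=> v /andP [v_high vz]; have := deg_neq_card_sub2 v T_gt4.
  have : deg e v != #|T|.-1.
    by rewrite -z_full; apply: contra vz => /eqP dvz; apply/eqP/deg_gt2_inj.
  by have := deg_lt_card v; lia.
have := double_sum_nat_subn 1 #|T|.-2; have := card_deg_eq2_le (ltnW T_gt4); nia.
Qed.

End FullVertex.

Lemma sum_deg_le : 4 < #|T| -> 2 * \sum_v deg e v + 3 * #|T| <= #|T| ^ 2 + 12.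
Proof.
move=> T_gt4; case: (boolP [exists z, deg e z == #|T|.-1]).
  by case/existsP => z /eqP z_full; apply: sum_deg_le_full z_full T_gt4.
by move/existsPn => no_full; apply: sum_deg_le_no_full => //; apply: ltnW.
Qed.

End SimpleGraph.

Theorem lemma3p2 (n : nat) (T : finType) (e : rel T) :
  3 <= n ->
  simple_graph e ->
  #|T| = 2 * n ->
  n ^ 2 - 1 <= nedges e ->
  (forall a b : T, a != b -> deg e a = deg e b -> ~ path3 e a b) ->
  forall beta : nat,
    (exists u v : T, u != v /\ deg e u = beta /\ deg e v = beta) ->
    (forall u v : T, u != v -> deg e u = deg e v -> deg e u <= beta) ->
    3 <= beta <= maxdeg e.
Proof.
move=> n_ge3 [sym_e irr_e] cardT nedges_ge path3_free beta [u [_ [_ [du _]]]] beta_max.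
have -> : beta <= maxdeg e by rewrite -du /maxdeg; apply: leq_bigmax.
rewrite andbT leqNgt; apply/negP => beta_lt3.
have deg_gt2_inj : {in [pred v | 2 < deg e v] &, injective (deg e)}.
  move=> a b; rewrite !inE => a_high _ dab; apply/eqP; apply: contraTT a_high => ab.
  by have := beta_max a b ab dab; lia.
have T_gt4 : 4 < #|T| by rewrite cardT; lia.
have := sum_deg_le sym_e irr_e path3_free deg_gt2_inj T_gt4.
have := handshake_leq sym_e irr_e.
rewrite cardT; nia.
Qed.
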